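(* Let $\Lambda$ be a 2-graph with $\Lambda^{\varepsilon_1}\sqcup\Lambda^{\varepsilon_2}$ finite. Then $(\Lambda^\infty,\sigma)$ is conjugate to the shift of finite type $(\mathsf X^+_{T_\Lambda},\sigma)$, via $x\mapsto(n\mapsto x(n,n+(1,1)))$.
   Context: 2-graph: countable category $\Lambda$ with functor $d:\Lambda\to\mathbb N^2$ with unique factorization; $\Lambda^m=d^{-1}(m)$; $\lambda(m,n)$ the unique factor of degree $n-m$ at position $[m,n]$ for $m\le n\le d(\lambda)$. $\Omega_2$ is the 2-graph with morphisms $\{(m,n)\in\mathbb N^2\times\mathbb N^2: m\le n\}$, composition $(l,m)(m,n)=(l,n)$, degree $d(m,n)=n-m$. $\Lambda^\infty$ is the set of degree-preserving functors $x:\Omega_2\to\Lambda$, with topology generated by $Z(\lambda)=\{y: y(0,d(\lambda))=\lambda\}$ and shifts $\sigma^p(x)(m,n)=x(m+p,n+p)$. $T_\Lambda=(p,q:F_\Lambda\to E_\Lambda)$: $E_\Lambda=(\Lambda^0,\Lambda^{\varepsilon_1},r,s)$; $F_\Lambda$ has vertices $\Lambda^{\varepsilon_2}$, edges $\Lambda^{\varepsilon_1+\varepsilon_2}$, $r(\lambda)=\lambda(0,\varepsilon_2)$, $s(\lambda)=\lambda(\varepsilon_1,\varepsilon_1+\varepsilon_2)$; $p(\lambda)=\lambda(\varepsilon_2,\varepsilon_1+\varepsilon_2)$, $q(\lambda)=\lambda(0,\varepsilon_1)$, and $p=s$, $q=r$ on $\Lambda^{\varepsilon_2}$. $\mathsf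 X^+_T=\{x:\mathbb N^2\to F^1: s(x_n)=r(x_{n+\varepsilon_1}),\ p(x_n)=q(x_{n+\varepsilon_2})\ \forall n\}$ with product topology and $(\sigma^mx)_n=x_{n+m}$. A conjugacy is a homeomorphism commuting with all shifts. *)

From Stdlib Require Import Arith Lia List ClassicalEpsilon.
Import ListNotations.
Set Implicit Arguments.
Unset Strict Implicit.

Definition N2 : Type := (nat * nat)%type.
Definition add2 (m n : N2) : N2 := (fst m + fst n, snd m + snd n).
Definition sub2 (n m : N2) : N2 := (fst n - fst m, snd n - snd m).
Definition le2b (m n : N2) : bool := Nat.leb (fst m) (fst n) && Nat.leb (snd m) (snd n).
Definition zero2 : N2 := (0, 0).
Definition eps1 : N2 := (1, 0).
Definition eps2 : N2 := (0, 1).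
Definition one2 : N2 := (1, 1).

(* ---------- 2-graphs ----------
   A countable category, presented arrows-only: objects are identified with
   identity morphisms (the vertices Lambda^0); [rg]/[sc] are range/source,
   [comp f g] is the composite "f g" (meaningful when [sc f = rg g]),
   [dg] the degree functor to (N^2,+), with the unique factorisation property. *)
Record TwoGraph := {
  Mor : Type;
  dg : Mor -> N2;
  rg : Mor -> Mor;
  sc : Mor -> Mor;
  comp : Mor -> Mor -> Mor;
  Mor_countable : exists f : Mor -> nat, forall a b, f a = f b -> a = b;
  rg_rg : forall f, rg (rg f) = rg f;
  sc_rg : forall f, sc (rg f) = rg f;
  rg_sc : forall f, rg (sc f) = sc f;
  sc_sc : forall f, sc (sc f) = sc f;
  comp_idl : forall f, comp (rg f) f = f;
  comp_idr : forall f, comp f (sc f) = f;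
  rg_comp : forall f g, sc f = rg g -> rg (comp f g) = rg f;
  sc_comp : forall f g, sc f = rg g -> sc (comp f g) = sc g;
  comp_assoc : forall f g h, sc f = rg g -> sc g = rg h ->
      comp (comp f g) h = comp f (comp g h);
  dg_comp : forall f g, sc f = rg g -> dg (comp f g) = add2 (dg f) (dg g);
  dg_id : forall f, dg (rg f) = zero2;
  ufp : forall l m n, dg l = add2 m n ->
      exists mu nu, (sc mu = rg nu /\ dg mu = m /\ dg nu = n /\ comp mu nu = l) /\
        forall mu' nu', sc mu' = rg nu' -> dg mu' = m -> dg nu' = n ->
          comp mu' nu' = l -> mu' = mu /\ nu' = nu
}.

Arguments dg {_}. Arguments rg {_}. Arguments sc {_}. Arguments comp {_}.

Definition is_factor (L : TwoGraph) (l : Mor L) (m n : N2) (mu : Mor L) : Prop :=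
  exists a b, sc a = rg mu /\ sc mu = rg b /\ dg a = m /\ dg mu = sub2 n m /\
    dg b = sub2 (dg l) n /\ comp (comp a mu) b = l.

(* lambda(m,n): the unique such factor (for m <= n <= d(lambda)) *)
Definition seg (L : TwoGraph) (l : Mor L) (m n : N2) : Mor L :=
  epsilon (inhabits l) (@is_factor L l m n).

Definition edges_finite (L : TwoGraph) : Prop :=
  exists s : list (Mor L), forall l, dg l = eps1 \/ dg l = eps2 -> In l s.

Definition O2 : Type := {p : N2 * N2 | le2b (fst p) (snd p) = true}.
Definition mkO2 (m n : N2) (h : le2b m n = true) : O2 :=
  exist (fun p : N2 * N2 => le2b (fst p) (snd p) = true) (m, n) h.

Definition is_inf_path (L : TwoGraph) (x : O2 -> Mor L) : Prop :=
  (forall o : O2, dg (x o) = sub2 (snd (proj1_sig o)) (fst (proj1_sig o))) /\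
  (forall m n (h : le2b m n = true) (hm : le2b m m = true),
      rg (x (mkO2 h)) = x (mkO2 hm)) /\
  (forall m n (h : le2b m n = true) (hn : le2b n n = true),
      sc (x (mkO2 h)) = x (mkO2 hn)) /\
  (forall l m n (h1 : le2b l m = true) (h2 : le2b m n = true) (h3 : le2b l n = true),
      x (mkO2 h3) = comp (x (mkO2 h1)) (x (mkO2 h2))).

Definition InfPath (L : TwoGraph) : Type := {x : O2 -> Mor L | is_inf_path x}.

Lemma le2b_shift (m n p : N2) : le2b m n = true -> le2b (add2 m p) (add2 n p) = true.
Proof.
  unfold le2b, add2; simpl. intros H.
  apply andb_prop in H as [H1 H2]. apply Nat.leb_le in H1, H2.
  apply andb_true_intro; split; apply Nat.leb_le; lia.
Qed.

Definition shiftO2 (p : N2) (o : O2) : O2 :=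
  mkO2 (le2b_shift p (proj2_sig o)).

Lemma shift_inf_path (L : TwoGraph) (p : N2) (x : O2 -> Mor L) :
  is_inf_path x -> is_inf_path (fun o => x (shiftO2 p o)).
Proof.
  intros [Hd [Hr [Hs Hc]]]. split; [|split; [|split]].
  - intros [[m n] h]. unfold shiftO2; simpl. rewrite Hd. simpl.
    unfold sub2, add2; simpl. f_equal; lia.
  - intros m n h hm. unfold shiftO2. simpl. apply Hr.
  - intros m n h hn. unfold shiftO2. simpl. apply Hs.
  - intros l m n h1 h2 h3. unfold shiftO2. simpl. apply Hc.
Qed.

Definition shift_inf (L : TwoGraph) (p : N2) (x : InfPath L) : InfPath L :=
  exist _ (fun o => proj1_sig x (shiftO2 p o)) (shift_inf_path p (proj2_sig x)).

Definition cyl (L : TwoGraph) (l : Mor L) (y : InfPath L) : Prop :=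
  exists h : le2b zero2 (dg l) = true, proj1_sig y (mkO2 h) = l.

Definition open_inf (L : TwoGraph) (U : InfPath L -> Prop) : Prop :=
  forall x, U x -> exists ls : list (Mor L),
    (forall l, In l ls -> cyl l x) /\
    (forall y, (forall l, In l ls -> cyl l y) -> U y).

Definition F_r (L : TwoGraph) (l : Mor L) := @seg L l zero2 eps2.
Definition F_s (L : TwoGraph) (l : Mor L) := @seg L l eps1 one2.
Definition F_p (L : TwoGraph) (l : Mor L) := @seg L l eps2 one2.
Definition F_q (L : TwoGraph) (l : Mor L) := @seg L l zero2 eps1.

Definition is_in_XT (L : TwoGraph) (x : N2 -> Mor L) : Prop :=
  forall n, dg (x n) = one2 /\
    F_s (x n) = F_r (x (add2 n eps1)) /\
    F_p (x n) = F_q (x (add2 n eps2)).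

Definition XT (L : TwoGraph) : Type := {x : N2 -> Mor L | is_in_XT x}.

Lemma shift_XT_ok (L : TwoGraph) (m : N2) (x : N2 -> Mor L) :
  is_in_XT x -> is_in_XT (fun n => x (add2 n m)).
Proof.
  intros H n. destruct (H (add2 n m)) as [H1 [H2 H3]].
  assert (E1 : add2 (add2 n eps1) m = add2 (add2 n m) eps1)
    by (unfold add2; simpl; f_equal; lia).
  assert (E2 : add2 (add2 n eps2) m = add2 (add2 n m) eps2)
    by (unfold add2; simpl; f_equal; lia).
  rewrite E1, E2. auto.
Qed.

Definition shift_XT (L : TwoGraph) (m : N2) (x : XT L) : XT L :=
  exist _ (fun n => proj1_sig x (add2 n m)) (shift_XT_ok m (proj2_sig x)).

Definition open_XT (L : TwoGraph) (U : XT L -> Prop) : Prop :=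
  forall x, U x -> exists S : list N2,
    forall y, (forall n, In n S -> proj1_sig y n = proj1_sig x n) -> U y.

Definition continuous_wrt (A B : Type) (openA : (A -> Prop) -> Prop)
  (openB : (B -> Prop) -> Prop) (f : A -> B) : Prop :=
  forall V, openB V -> openA (fun a => V (f a)).

Definition homeomorphism (A B : Type) (openA : (A -> Prop) -> Prop)
  (openB : (B -> Prop) -> Prop) (f : A -> B) : Prop :=
  exists g : B -> A, (forall a, g (f a) = a) /\ (forall b, f (g b) = b) /\
    continuous_wrt openA openB f /\ continuous_wrt openB openA g.

Definition conjugacy (L : TwoGraph) (h : InfPath L -> XT L) : Prop :=
  homeomorphism (@open_inf L) (@open_XT L) h /\
  forall p x, h (shift_inf p x) = shift_XT p (h x).

(* A path x is sent to its unit squares x(n, n + (1,1)); neighbouring squares share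
   an edge, so the image lies in X_T.  Conversely a compatible array y of unit squares
   gives, for m <= n, the morphism obtained by walking from m along the bottom edges of
   the squares horizontally and then up along their left edges vertically.  The
   squares of y commute, so any two ways of walking agree; this makes the construction
   functorial, i.e. an infinite path, and the unique factorisation property shows that
   the two constructions are mutually inverse.  Both are continuous because x(0,n) is
   determined by the squares in the box [0,n] and conversely. *)

From Stdlib Require Import Arith List Lia ClassicalEpsilon FunctionalExtensionality ProofIrrelevance.

Definition le2 (m n : N2) : Prop := fst m <= fst n /\ snd m <= snd n.

Ltac solve_N2 := unfold le2, sub2, add2, one2, eps1, eps2, zero2 in *; cbn [fst snd] in *;
  first [ split; lia | f_equal; lia | lia ].

Lemma le2bP (m n : N2) : le2b m n = true <-> le2 m n.
Proof. unfold le2b, le2. rewrite Bool.andb_true_iff, !Nat.leb_le. tauto. Qed.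

Lemma le2b_refl (m : N2) : le2b m m = true.
Proof. apply le2bP; solve_N2. Qed.

Lemma le2_0l (n : N2) : le2 zero2 n.
Proof. solve_N2. Qed.

Lemma sub2_0r (n : N2) : sub2 n zero2 = n.
Proof. destruct n; solve_N2. Qed.

Section TwoGraphFactors.
Context {L : TwoGraph}.

Lemma dg_sc (f : Mor L) : dg (sc f) = zero2.
Proof. rewrite <- (rg_sc f). apply dg_id. Qed.

Lemma factorisation_unique {mu nu mu' nu' : Mor L} :
  sc mu = rg nu -> sc mu' = rg nu' -> dg mu = dg mu' -> dg nu = dg nu' ->
  comp mu nu = comp mu' nu' -> mu = mu' /\ nu = nu'.
Proof.
  intros H H' Emu Enu E.
  destruct (ufp (dg_comp H)) as [a [b [_ U]]].
  destruct (U mu nu H eq_refl eq_refl eq_refl) as [-> ->].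
  destruct (U mu' nu' H' (eq_sym Emu) (eq_sym Enu) (eq_sym E)) as [-> ->].
  auto.
Qed.

Lemma is_factor_unique (l : Mor L) m n mu mu' :
  is_factor l m n mu -> is_factor l m n mu' -> mu = mu'.
Proof.
  intros [a [b [Ha [Hb [Da [Dmu [Db E]]]]]]]
         [a' [b' [Ha' [Hb' [Da' [Dmu' [Db' E']]]]]]].
  assert (Hab : sc (comp a mu) = rg b) by (rewrite sc_comp; auto).
  assert (Hab' : sc (comp a' mu') = rg b') by (rewrite sc_comp; auto).
  assert (Eamu : comp a mu = comp a' mu').
  { refine (proj1 (factorisation_unique Hab Hab' _ _ _)); try congruence.
    rewrite !dg_comp by auto. congruence. }
  refine (proj2 (factorisation_unique Ha Ha' _ _ _)); congruence.
Qed.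

Lemma seg_unique (l : Mor L) m n mu : is_factor l m n mu -> seg l m n = mu.
Proof.
  intros H. eapply is_factor_unique; [|exact H].
  unfold seg. apply epsilon_spec. eauto.
Qed.

Lemma seg_comp {mu nu : Mor L} : sc mu = rg nu ->
  seg (comp mu nu) zero2 (dg mu) = mu /\
  seg (comp mu nu) (dg mu) (add2 (dg mu) (dg nu)) = nu.
Proof.
  intros H. split; apply seg_unique.
  - exists (rg mu), nu. rewrite sc_rg, dg_id, comp_idl, (dg_comp H).
    destruct (dg mu), (dg nu); repeat split; auto; solve_N2.
  - exists mu, (sc nu). rewrite rg_sc, dg_sc, <- (sc_comp H), comp_idr, (dg_comp H).
    destruct (dg mu), (dg nu); repeat split; auto; solve_N2.
Qed.

Lemma seg_factorisation (l : Mor L) a b : dg l = add2 a b ->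
  sc (seg l zero2 a) = rg (seg l a (add2 a b)) /\
  comp (seg l zero2 a) (seg l a (add2 a b)) = l /\
  dg (seg l zero2 a) = a /\ dg (seg l a (add2 a b)) = b.
Proof.
  intros H. destruct (ufp H) as [mu [nu [[Hmn [<- [<- <-]]] _]]].
  destruct (seg_comp Hmn) as [-> ->]. auto.
Qed.

End TwoGraphFactors.

Section InfinitePaths.
Context {L : TwoGraph}.

(* [x(m,n)] as a total function of [m] and [n], with junk value [x(m,m)] when [m] is
   not below [n]. *)
Definition xat (x : O2 -> Mor L) (m n : N2) : Mor L :=
  match Bool.bool_dec (le2b m n) true with
  | left h => x (mkO2 h)
  | right _ => x (mkO2 (le2b_refl m))
  end.

Lemma xat_mkO2 (x : O2 -> Mor L) {m n} (h : le2b m n = true) : x (mkO2 h) = xat x m n.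
Proof.
  unfold xat. destruct (Bool.bool_dec (le2b m n) true) as [h'|]; [|congruence].
  do 2 f_equal. apply proof_irrelevance.
Qed.

Lemma cyl_xat (l : Mor L) (y : InfPath L) :
  cyl l y <-> xat (proj1_sig y) zero2 (dg l) = l.
Proof.
  split.
  - intros [h E]. rewrite <- (xat_mkO2 _ h). exact E.
  - intros E. assert (h : le2b zero2 (dg l) = true) by apply le2bP, le2_0l.
    exists h. rewrite (xat_mkO2 _ h). exact E.
Qed.

Lemma xat_shift (x : O2 -> Mor L) p m n : le2 m n ->
  xat (fun o => x (shiftO2 p o)) m n = xat x (add2 m p) (add2 n p).
Proof.
  intros H. apply le2bP in H. rewrite <- (xat_mkO2 _ H).
  unfold shiftO2. apply xat_mkO2.
Qed.

Context {x : O2 -> Mor L} (X : is_inf_path x).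

Lemma path_dg {m n} : le2 m n -> dg (xat x m n) = sub2 n m.
Proof.
  destruct X as [Hd _]. intros H. apply le2bP in H.
  rewrite <- (xat_mkO2 _ H). apply Hd.
Qed.

Lemma path_rg {m n} : le2 m n -> rg (xat x m n) = xat x m m.
Proof.
  destruct X as [_ [Hr _]]. intros H. apply le2bP in H.
  rewrite <- (xat_mkO2 _ H), <- (xat_mkO2 _ (le2b_refl m)). apply Hr.
Qed.

Lemma path_comp {l m n} : le2 l m -> le2 m n -> xat x l n = comp (xat x l m) (xat x m n).
Proof.
  destruct X as [_ [_ [_ Hc]]]. intros Hlm Hmn.
  assert (Hln : le2 l n) by solve_N2.
  apply le2bP in Hlm, Hmn, Hln.
  rewrite <- (xat_mkO2 _ Hlm), <- (xat_mkO2 _ Hmn), <- (xat_mkO2 _ Hln). apply Hc.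
Qed.

Lemma path_sc {m n} : le2 m n -> sc (xat x m n) = xat x n n.
Proof.
  destruct X as [_ [_ [Hs _]]]. intros H. apply le2bP in H.
  rewrite <- (xat_mkO2 _ H), <- (xat_mkO2 _ (le2b_refl n)). apply Hs.
Qed.

Lemma path_seg {q} m n {p u v} :
  le2 q m -> le2 m n -> le2 n p -> sub2 m q = u -> sub2 n q = v ->
  seg (xat x q p) u v = xat x m n.
Proof.
  intros Hqm Hmn Hnp <- <-.
  assert (Hqn : le2 q n) by solve_N2. assert (Hqp : le2 q p) by solve_N2.
  apply seg_unique. exists (xat x q m), (xat x n p).
  rewrite (path_sc Hqm), (path_rg Hmn), (path_sc Hmn), (path_rg Hnp),
    (path_dg Hqm), (path_dg Hmn), (path_dg Hnp), (path_dg Hqp),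
    <- (path_comp Hqm Hmn), <- (path_comp Hqn Hnp).
  repeat split; auto; solve_N2.
Qed.

End InfinitePaths.

Section UnitSquares.
Context {L : TwoGraph}.

Definition square_seq (x : O2 -> Mor L) (n : N2) : Mor L := xat x n (add2 n one2).

Lemma square_seq_in_XT {x : O2 -> Mor L} : is_inf_path x -> is_in_XT (square_seq x).
Proof.
  intros X [a b]. unfold F_s, F_r, F_p, F_q, square_seq. split; [|split].
  - rewrite (path_dg X); solve_N2.
  - rewrite (path_seg X (a + 1, b) (a + 1, b + 1)),
      (path_seg X (a + 1, b) (a + 1, b + 1)); try reflexivity; solve_N2.
  - rewrite (path_seg X (a, b + 1) (a + 1, b + 1)),
      (path_seg X (a, b + 1) (a + 1, b + 1)); try reflexivity; solve_N2.
Qed.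

Lemma xat_agree_below {x x' : O2 -> Mor L} : is_inf_path x -> is_inf_path x' ->
  forall m n p, le2 m n -> le2 n p ->
  xat x zero2 p = xat x' zero2 p -> xat x m n = xat x' m n.
Proof.
  intros X X' m n p Hmn Hnp E.
  rewrite <- (path_seg X m n (q := zero2) (p := p) (u := m) (v := n)),
    <- (path_seg X' m n (q := zero2) (p := p) (u := m) (v := n)), E;
    auto using le2_0l, sub2_0r.
Qed.

End UnitSquares.

Section RectanglePaths.
Context {L : TwoGraph}.

Definition vertex (y : N2 -> Mor L) i j : Mor L := rg (y (i, j)).
Definition hedge (y : N2 -> Mor L) i j : Mor L := F_q (y (i, j)).
Definition vedge (y : N2 -> Mor L) i j : Mor L := F_r (y (i, j)).

Fixpoint hpath (y : N2 -> Mor L) i k j : Mor L :=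
  match k with
  | 0 => vertex y i j
  | S k => comp (hedge y i j) (hpath y (S i) k j)
  end.

Fixpoint vpath (y : N2 -> Mor L) i j k : Mor L :=
  match k with
  | 0 => vertex y i j
  | S k => comp (vedge y i j) (vpath y i (S j) k)
  end.

Definition rect (y : N2 -> Mor L) (m n : N2) : Mor L :=
  comp (hpath y (fst m) (fst n - fst m) (snd m))
       (vpath y (fst n) (snd m) (snd n - snd m)).

Definition rect_path (y : N2 -> Mor L) (o : O2) : Mor L :=
  rect y (fst (proj1_sig o)) (snd (proj1_sig o)).

Lemma xat_rect_path (y : N2 -> Mor L) m n : le2 m n -> xat (rect_path y) m n = rect y m n.
Proof. intros H. apply le2bP in H. rewrite <- (xat_mkO2 _ H). reflexivity. Qed.

Lemma hpath_local (y y' : N2 -> Mor L) i k j :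
  (forall t, t <= k -> y (i + t, j) = y' (i + t, j)) -> hpath y i k j = hpath y' i k j.
Proof.
  induction k as [|k IH] in i |- *; intros E;
    assert (E0 := E 0 (Nat.le_0_l _)); rewrite Nat.add_0_r in E0; simpl.
  - unfold vertex. rewrite E0. reflexivity.
  - unfold hedge. rewrite E0. f_equal. apply IH. intros t Ht.
    replace (S i + t) with (i + S t) by lia. apply E. lia.
Qed.

Lemma vpath_local (y y' : N2 -> Mor L) i j k :
  (forall t, t <= k -> y (i, j + t) = y' (i, j + t)) -> vpath y i j k = vpath y' i j k.
Proof.
  induction k as [|k IH] in j |- *; intros E;
    assert (E0 := E 0 (Nat.le_0_l _)); rewrite Nat.add_0_r in E0; simpl.
  - unfold vertex. rewrite E0. reflexivity.
  - unfold vedge. rewrite E0. f_equal. apply IH. intros t Ht.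
    replace (S j + t) with (j + S t) by lia. apply E. lia.
Qed.

Lemma rect_local (y y' : N2 -> Mor L) d :
  (forall i j, i <= fst d -> j <= snd d -> y (i, j) = y' (i, j)) ->
  rect y zero2 d = rect y' zero2 d.
Proof.
  intros E. unfold rect, zero2. simpl. rewrite !Nat.sub_0_r. f_equal.
  - apply hpath_local. intros t Ht. apply E; lia.
  - apply vpath_local. intros t Ht. apply E; lia.
Qed.

End RectanglePaths.

Definition box (d : N2) : list N2 :=
  flat_map (fun i => map (fun j => (i, j)) (seq 0 (S (snd d)))) (seq 0 (S (fst d))).

Lemma in_box d i j : i <= fst d -> j <= snd d -> In (i, j) (box d).
Proof.
  intros Hi Hj. apply in_flat_map. exists i. split.
  - apply in_seq. lia.
  - apply in_map_iff. exists j. split; auto. apply in_seq. lia.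
Qed.

Section CompatibleSquares.
Context {L : TwoGraph} {y : N2 -> Mor L} (Y : is_in_XT y).

Lemma square_hv i j : sc (hedge y i j) = rg (vedge y (S i) j) /\
  comp (hedge y i j) (vedge y (S i) j) = y (i, j) /\ dg (hedge y i j) = eps1.
Proof.
  destruct (Y (i, j)) as [D [Fs _]].
  destruct (seg_factorisation (y (i, j)) eps1 eps2 D) as [Hc [E [Dh _]]].
  replace (add2 (i, j) eps1) with (S i, j) in Fs by solve_N2.
  unfold hedge, vedge, F_q. rewrite <- Fs. auto.
Qed.

Lemma square_vh i j : sc (vedge y i j) = rg (hedge y i (S j)) /\
  comp (vedge y i j) (hedge y i (S j)) = y (i, j) /\ dg (vedge y i j) = eps2.
Proof.
  destruct (Y (i, j)) as [D [_ Fp]].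
  destruct (seg_factorisation (y (i, j)) eps2 eps1 D) as [Hc [E [Dv _]]].
  replace (add2 (i, j) eps2) with (i, S j) in Fp by solve_N2.
  unfold hedge, vedge, F_r. rewrite <- Fp. auto.
Qed.

Lemma hedge_rg i j : rg (hedge y i j) = vertex y i j.
Proof.
  destruct (square_hv i j) as [Hc [E _]]. unfold vertex. rewrite <- E, rg_comp; auto.
Qed.

Lemma vedge_rg i j : rg (vedge y i j) = vertex y i j.
Proof.
  destruct (square_vh i j) as [Hc [E _]]. unfold vertex. rewrite <- E, rg_comp; auto.
Qed.

Lemma hedge_sc i j : sc (hedge y i j) = vertex y (S i) j.
Proof. rewrite (proj1 (square_hv i j)). apply vedge_rg. Qed.

Lemma vedge_sc i j : sc (vedge y i j) = vertex y i (S j).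
Proof. rewrite (proj1 (square_vh i j)). apply hedge_rg. Qed.

Lemma hpath_rg i k j : rg (hpath y i k j) = vertex y i j.
Proof.
  induction k as [|k IH] in i |- *; simpl.
  - apply rg_rg.
  - rewrite rg_comp; [apply hedge_rg|]. rewrite IH. apply hedge_sc.
Qed.

Lemma vpath_rg i j k : rg (vpath y i j k) = vertex y i j.
Proof.
  induction k as [|k IH] in j |- *; simpl.
  - apply rg_rg.
  - rewrite rg_comp; [apply vedge_rg|]. rewrite IH. apply vedge_sc.
Qed.

Lemma hpath_sc i k j : sc (hpath y i k j) = vertex y (i + k) j.
Proof.
  induction k as [|k IH] in i |- *; simpl.
  - rewrite Nat.add_0_r. apply sc_rg.
  - rewrite sc_comp, IH by (rewrite hpath_rg; apply hedge_sc). f_equal. lia.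
Qed.

Lemma vpath_sc i j k : sc (vpath y i j k) = vertex y i (j + k).
Proof.
  induction k as [|k IH] in j |- *; simpl.
  - rewrite Nat.add_0_r. apply sc_rg.
  - rewrite sc_comp, IH by (rewrite vpath_rg; apply vedge_sc). f_equal. lia.
Qed.

Lemma hpath_dg i k j : dg (hpath y i k j) = (k, 0).
Proof.
  induction k as [|k IH] in i |- *; simpl.
  - apply dg_id.
  - rewrite dg_comp, IH, (proj2 (proj2 (square_hv i j)))
      by (rewrite hpath_rg; apply hedge_sc). solve_N2.
Qed.

Lemma vpath_dg i j k : dg (vpath y i j k) = (0, k).
Proof.
  induction k as [|k IH] in j |- *; simpl.
  - apply dg_id.
  - rewrite dg_comp, IH, (proj2 (proj2 (square_vh i j)))
      by (rewrite vpath_rg; apply vedge_sc). solve_N2.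
Qed.

Local Ltac solve_composable := repeat first
  [ rewrite hpath_rg | rewrite hpath_sc | rewrite vpath_rg | rewrite vpath_sc
  | rewrite hedge_rg | rewrite hedge_sc | rewrite vedge_rg | rewrite vedge_sc
  | rewrite rg_comp by solve_composable | rewrite sc_comp by solve_composable ];
  first [ reflexivity | f_equal; lia ].

Lemma hpath_add i a c j :
  hpath y i (a + c) j = comp (hpath y i a j) (hpath y (i + a) c j).
Proof.
  induction a as [|a IH] in i |- *; simpl.
  - rewrite Nat.add_0_r, <- (hpath_rg i c j), comp_idl. reflexivity.
  - rewrite IH, comp_assoc by solve_composable. do 3 f_equal. lia.
Qed.

Lemma vpath_add i j a c :
  vpath y i j (a + c) = comp (vpath y i j a) (vpath y i (j + a) c).
Proof.
  induction a as [|a IH] in j |- *; simpl.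
  - rewrite Nat.add_0_r, <- (vpath_rg i j c), comp_idl. reflexivity.
  - rewrite IH, comp_assoc by solve_composable. do 3 f_equal. lia.
Qed.

Lemma vpath_hedge_comm i j b :
  comp (vpath y i j b) (hedge y i (j + b)) = comp (hedge y i j) (vpath y (S i) j b).
Proof.
  induction b as [|b IH] in j |- *; simpl.
  - rewrite Nat.add_0_r, <- hedge_rg, comp_idl, <- hedge_sc, comp_idr. reflexivity.
  - rewrite comp_assoc by solve_composable. replace (j + S b) with (S j + b) by lia.
    rewrite IH, <- comp_assoc by solve_composable.
    rewrite (proj1 (proj2 (square_vh i j))), <- (proj1 (proj2 (square_hv i j))).
    apply comp_assoc; solve_composable.
Qed.

Lemma vpath_hpath_comm i j a b :
  comp (vpath y i j b) (hpath y i a (j + b)) = comp (hpath y i a j) (vpath y (i + a) j b).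
Proof.
  induction a as [|a IH] in i |- *; simpl.
  - rewrite Nat.add_0_r, <- (vpath_sc i j b), comp_idr, <- (vpath_rg i j b), comp_idl.
    reflexivity.
  - rewrite <- comp_assoc, vpath_hedge_comm, comp_assoc, IH, comp_assoc by solve_composable.
    do 3 f_equal. lia.
Qed.

Lemma rect_rg m n : le2 m n -> rg (rect y m n) = vertex y (fst m) (snd m).
Proof. intros [H1 H2]. unfold rect. solve_composable. Qed.

Lemma rect_sc m n : le2 m n -> sc (rect y m n) = vertex y (fst n) (snd n).
Proof. intros [H1 H2]. unfold rect. solve_composable. Qed.

Lemma rect_dg m n : le2 m n -> dg (rect y m n) = sub2 n m.
Proof.
  intros [H1 H2]. unfold rect. rewrite dg_comp, hpath_dg, vpath_dg by solve_composable.
  solve_N2.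
Qed.

Lemma rect_refl m : rect y m m = vertex y (fst m) (snd m).
Proof.
  unfold rect. rewrite !Nat.sub_diag. simpl.
  rewrite <- (sc_rg (y (fst m, snd m))) at 2. apply comp_idr.
Qed.

Lemma rect_comp l m n : le2 l m -> le2 m n -> rect y l n = comp (rect y l m) (rect y m n).
Proof.
  destruct l as [l1 l2], m as [m1 m2], n as [n1 n2]. intros [H1 H2] [H3 H4].
  simpl in *. unfold rect. simpl.
  replace (n1 - l1) with ((m1 - l1) + (n1 - m1)) by lia.
  replace (n2 - l2) with ((m2 - l2) + (n2 - m2)) by lia.
  rewrite hpath_add, vpath_add.
  replace (l1 + (m1 - l1)) with m1 by lia. replace (l2 + (m2 - l2)) with m2 by lia.
  assert (Hcomm : comp (vpath y m1 l2 (m2 - l2)) (hpath y m1 (n1 - m1) m2)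
                = comp (hpath y m1 (n1 - m1) l2) (vpath y n1 l2 (m2 - l2))).
  { pose proof (vpath_hpath_comm m1 l2 (n1 - m1) (m2 - l2)) as E.
    replace (l2 + (m2 - l2)) with m2 in E by lia.
    replace (m1 + (n1 - m1)) with n1 in E by lia. exact E. }
  rewrite !comp_assoc by solve_composable. f_equal.
  rewrite <- !comp_assoc, Hcomm by solve_composable. reflexivity.
Qed.

Lemma rect_path_is_inf_path : is_inf_path (rect_path y).
Proof.
  unfold rect_path. split; [|split; [|split]].
  - intros [[m n] h]. apply rect_dg, le2bP, h.
  - intros m n h hm. simpl. rewrite rect_rg, rect_refl by apply le2bP, h. reflexivity.
  - intros m n h hn. simpl. rewrite rect_sc, rect_refl by apply le2bP, h. reflexivity.
  - intros l m n h1 h2 h3. apply rect_comp; apply le2bP; assumption.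
Qed.

Lemma rect_unit_square n : rect y n (add2 n one2) = y n.
Proof.
  destruct n as [i j]. unfold rect, add2, one2. simpl.
  rewrite !Nat.add_1_r, !Nat.sub_succ_l, !Nat.sub_diag by lia. simpl.
  rewrite <- hedge_sc, comp_idr, <- vedge_sc, comp_idr. apply square_hv.
Qed.

End CompatibleSquares.

Section SquaresOfAPath.
Context {L : TwoGraph} {x : O2 -> Mor L} (X : is_inf_path x).

Lemma hpath_square_seq i k j : hpath (square_seq x) i k j = xat x (i, j) (i + k, j).
Proof.
  induction k as [|k IH] in i |- *; simpl.
  - rewrite Nat.add_0_r. apply (path_rg X). solve_N2.
  - unfold hedge, F_q, square_seq at 1.
    rewrite IH, (path_seg X (i, j) (S i, j)), <- (path_comp X) by solve_N2.
    f_equal. f_equal. lia.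
Qed.

Lemma vpath_square_seq i j k : vpath (square_seq x) i j k = xat x (i, j) (i, j + k).
Proof.
  induction k as [|k IH] in j |- *; simpl.
  - rewrite Nat.add_0_r. apply (path_rg X). solve_N2.
  - unfold vedge, F_r, square_seq at 1.
    rewrite IH, (path_seg X (i, j) (i, S j)), <- (path_comp X) by solve_N2.
    f_equal. f_equal. lia.
Qed.

Lemma rect_square_seq m n : le2 m n -> rect (square_seq x) m n = xat x m n.
Proof.
  destruct m as [m1 m2], n as [n1 n2]. intros [H1 H2]. simpl in *.
  unfold rect. simpl. rewrite hpath_square_seq, vpath_square_seq.
  replace (m1 + (n1 - m1)) with n1 by lia. replace (m2 + (n2 - m2)) with n2 by lia.
  symmetry. apply (path_comp X); solve_N2.
Qed.

End SquaresOfAPath.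

Section Conjugacy.
Context {L : TwoGraph}.

Definition square_map (x : InfPath L) : XT L :=
  exist _ (square_seq (proj1_sig x)) (square_seq_in_XT (proj2_sig x)).

Definition rect_map (y : XT L) : InfPath L :=
  exist _ (rect_path (proj1_sig y)) (rect_path_is_inf_path (proj2_sig y)).

Lemma rect_map_square_map (x : InfPath L) : rect_map (square_map x) = x.
Proof.
  destruct x as [x X]. unfold rect_map, square_map. apply subset_eq_compat.
  apply functional_extensionality. intros [[m n] h]. unfold rect_path. simpl.
  rewrite (rect_square_seq X) by apply le2bP, h. symmetry. apply xat_mkO2.
Qed.

Lemma square_map_rect_map (y : XT L) : square_map (rect_map y) = y.
Proof.
  destruct y as [y Y]. unfold square_map, rect_map. apply subset_eq_compat.
  apply functional_extensionality. intros n. unfold square_seq. simpl.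
  rewrite xat_rect_path by solve_N2. apply (rect_unit_square Y).
Qed.

Lemma square_map_shift p (x : InfPath L) :
  square_map (shift_inf p x) = shift_XT p (square_map x).
Proof.
  destruct x as [x X]. unfold square_map, shift_inf, shift_XT. apply subset_eq_compat.
  apply functional_extensionality. intros n. unfold square_seq. simpl.
  rewrite xat_shift by solve_N2. f_equal. solve_N2.
Qed.

Lemma square_map_continuous : continuous_wrt (@open_inf L) (@open_XT L) square_map.
Proof.
  intros V HV [x X] Vx. destruct (HV _ Vx) as [S HS].
  exists (map (fun n => xat x zero2 (add2 n one2)) S). split.
  - intros l Hl. apply in_map_iff in Hl as [n [<- _]]. apply cyl_xat. simpl.
    rewrite (path_dg X), sub2_0r by apply le2_0l. reflexivity.
  - intros [y Y] Hy. apply HS. intros n Hn. simpl. unfold square_seq.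
    apply (xat_agree_below Y X n (add2 n one2) (add2 n one2)); try solve_N2.
    specialize (Hy _ (in_map _ _ _ Hn)). apply cyl_xat in Hy. simpl in Hy.
    rewrite (path_dg X), sub2_0r in Hy by apply le2_0l. exact Hy.
Qed.

Lemma rect_map_continuous : continuous_wrt (@open_XT L) (@open_inf L) rect_map.
Proof.
  intros U HU [y Y] Uy. destruct (HU _ Uy) as [ls [Hcyl HU']].
  exists (flat_map (fun l => box (dg l)) ls).
  intros [y' Y'] Hagree. apply HU'. intros l Hl.
  specialize (Hcyl l Hl). apply cyl_xat in Hcyl. apply cyl_xat. simpl in *.
  rewrite (xat_rect_path y') by apply le2_0l.
  rewrite (xat_rect_path y) in Hcyl by apply le2_0l.
  transitivity (rect y zero2 (dg l)); [apply rect_local | exact Hcyl]. intros i j Hi Hj.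
  apply Hagree, in_flat_map. exists l. split; [assumption | apply in_box; assumption].
Qed.

End Conjugacy.

(* The finiteness hypothesis only makes X_T a shift of finite type; the conjugacy
   itself does not need it. *)
Theorem lemma4p9 (L : TwoGraph) (Hfin : edges_finite L) :
  exists h : InfPath L -> XT L,
    (forall (x : InfPath L) (n : N2) (hn : le2b n (add2 n one2) = true),
        proj1_sig (h x) n = proj1_sig x (mkO2 hn)) /\
    conjugacy h.
Proof.
  exists square_map. split; [|split].
  - intros x n hn. symmetry. apply xat_mkO2.
  - exists rect_map. split; [|split; [|split]].
    + apply rect_map_square_map.
    + apply square_map_rect_map.
    + apply square_map_continuous.
    + apply rect_map_continuous.
  - apply square_map_shift.
Qed.
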